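(* Let $G$ be a claw-free graph and $C_0$ an even hole of $G$. If a vertex $\mathbf{t}$ lies in $\Gamma[C_0]$, then $\mathbf{t}\in\Gamma[C]$ for every even hole $C\in\langle C_0\rangle$.
   Context: A hole is an induced cycle of length $\ge4$; even hole: even length. Claw-free: no induced $K_{1,3}$. For a vertex set $U$, $\Gamma[U]=\bigcup_{\mathbf{j}\in U}(\Gamma(\mathbf{j})\cup\{\mathbf{j}\})$ is its closed neighbourhood. Single-vertex deformation: if $C$ is an even hole and $\mathbf{j}\notin C$ has $\Gamma_C(\mathbf{j})=\{\mathbf{u},\mathbf{k},\mathbf{v}\}$ with $\mathbf{u},\mathbf{v}$ the two neighbours of $\mathbf{k}$ in $C$, then $(C\setminus\{\mathbf{k}\})\cup\{\mathbf{j}\}$ is a single-vertex deformation of $C$. The deformation closure $\langle C_0\rangle$ is the smallest set of holes containing $C_0$ and closed under single-vertex deformations. *)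

From mathcomp Require Import all_boot.
Set Implicit Arguments. Unset Strict Implicit. Unset Printing Implicit Defensive.

Section Graph.
Variables (T : finType) (e : rel T).

Definition simple_graph : Prop := symmetric e /\ irreflexive e.

Definition claw_free : Prop :=
  ~ exists a b c d : T,
      [&& e a b, e a c, e a d, b != c, b != d, c != d,
          ~~ e b c, ~~ e b d & ~~ e c d].

(* C is a hole (induced cycle of length >= 4): its vertices can be listed
   without repetition as s, size s >= 4, so that two vertices of C are
   adjacent iff they are cyclically consecutive in s. *)
Definition hole (C : {set T}) : Prop :=
  exists s : seq T,
    [/\ uniq s, 4 <= size s, C = [set x in s] &
        forall (x0 : T) i j, i < size s -> j < size s ->
          e (nth x0 s i) (nth x0 s j) =
          (j == i.+1 %% size s) || (i == j.+1 %% size s) ].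

Definition even_hole (C : {set T}) : Prop := hole C /\ ~~ odd #|C|.

Definition nbhd_in (C : {set T}) (j : T) : {set T} := [set x in C | e j x].

Definition closed_nbhd (U : {set T}) : {set T} :=
  [set x | [exists y in U, (x == y) || e y x]].

Inductive deform_closure (C0 : {set T}) : {set T} -> Prop :=
| dc_base : deform_closure C0 C0
| dc_step (C : {set T}) (j k u v : T) :
    deform_closure C0 C -> even_hole C -> j \notin C -> k \in C ->
    u != v -> nbhd_in C k = [set u; v] ->
    nbhd_in C j = [set u; k; v] ->
    deform_closure C0 ((C :\ k) :|: [set j]).
End Graph.

From mathcomp Require Import all_boot zify.

Set Implicit Arguments.
Unset Strict Implicit.
Unset Printing Implicit Defensive.

(* When an even hole C is deformed
   to (C \ k) + j, a vertex dominated by some vertex of C other than k stays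
   dominated, and k itself is dominated by j. A neighbour t of k sees one of
   the two neighbours u, v of k on C: otherwise, as u and v are non-adjacent
   (a hole is triangle-free), k, t, u, v would form a claw. *)

Definition cyc_adj (n i j : nat) : bool := (j == i.+1 %% n) || (i == j.+1 %% n).

Lemma modS_lt (n i : nat) : i < n -> i.+1 %% n = if i.+1 == n then 0 else i.+1.
Proof.
move=> lt_in; case: eqP => [->|/eqP ne]; first by rewrite modnn.
by rewrite modn_small // ltn_neqAle ne.
Qed.

(* A triangle would give a sum of three terms +-1 that vanishes modulo n;
   such a sum is odd and of absolute value at most 3 < n. *)
Lemma cyc_adj_triangle_free (n a b c : nat) :
  4 <= n -> a < n -> b < n -> c < n ->
  ~~ [&& cyc_adj n a b, cyc_adj n b c & cyc_adj n c a].
Proof.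
rewrite /cyc_adj => n4 an bn cn; apply/negP.
rewrite !modS_lt //.
by do 3 case: ifP => /eqP ?;
  case/and3P => /orP[]/eqP ab /orP[]/eqP bc /orP[]/eqP ca; lia.
Qed.

Section ClosedNeighbourhood.
Variables (T : finType) (e : rel T).

Lemma hole_triangle_free (C : {set T}) (x y z : T) :
  hole e C -> x \in C -> y \in C -> z \in C ->
  ~~ [&& e x y, e y z & e z x].
Proof.
case=> s [_ s4 -> e_nth]; rewrite !inE => xs ys zs.
have [ix iy iz] :
    [/\ index x s < size s, index y s < size s & index z s < size s].
  by rewrite !index_mem.
have := cyc_adj_triangle_free s4 ix iy iz.
by rewrite /cyc_adj -!(e_nth x) // !nth_index.
Qed.

Lemma closed_nbhdP (U : {set T}) (t : T) :
  reflect (exists2 y, y \in U & (t == y) || e y t) (t \in closed_nbhd e U).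
Proof. by rewrite inE; apply: exists_inP. Qed.

Lemma closed_nbhdS (U V : {set T}) :
  U \subset V -> closed_nbhd e U \subset closed_nbhd e V.
Proof.
move=> /subsetP UV; apply/subsetP => t /closed_nbhdP[y yU ty].
by apply/closed_nbhdP; exists y; first exact: UV.
Qed.

Hypotheses (e_sym : symmetric e) (e_cf : claw_free e).

Lemma claw_free_closed_nbhd_pair (k t u v : T) :
  e k t -> e k u -> e k v -> u != v -> ~~ e u v ->
  t \in closed_nbhd e [set u; v].
Proof.
move=> ekt eku ekv uv nuv; apply: contraT => tN; case: e_cf.
have far w : w \in [set u; v] -> (t != w) && ~~ e t w.
  move=> wuv; rewrite -negb_or e_sym; apply: contra tN => tw.
  by apply/closed_nbhdP; exists w.
have /andP[tu ntu] := far u (set21 u v).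
have /andP[tv ntv] := far v (set22 u v).
by exists k, t, u, v; rewrite ekt eku ekv tu tv uv ntu ntv.
Qed.

Hypothesis e_irr : irreflexive e.

Lemma closed_nbhd_deform (C : {set T}) (j k u v t : T) :
  hole e C -> k \in C -> e j k -> u != v -> nbhd_in e C k = [set u; v] ->
  t \in closed_nbhd e C -> t \in closed_nbhd e ((C :\ k) :|: [set j]).
Proof.
move=> holeC kC ejk uv Nk /closed_nbhdP[y yC ty].
move: ty; have [->|yk] := eqVneq y k; last first.
  by move=> ty; apply/closed_nbhdP; exists y; rewrite // !inE yk yC.
case/orP=> [/eqP->|ekt].
  by apply/closed_nbhdP; exists j; rewrite ?ejk ?orbT // !inE eqxx orbT.
have nbr w : w \in [set u; v] -> (w \in C) && e k w by rewrite -Nk inE.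
have /andP[uC eku] := nbr u (set21 u v).
have /andP[vC ekv] := nbr v (set22 u v).
have nuv : ~~ e u v.
  move: (hole_triangle_free holeC kC uC vC); apply: contra => euv.
  by rewrite eku euv e_sym.
suff /closed_nbhdS/subsetP: [set u; v] \subset (C :\ k) :|: [set j].
  by apply; apply: claw_free_closed_nbhd_pair ekt eku ekv uv nuv.
apply/subsetP => w /nbr/andP[wC ekw].
have wk : w != k by apply: contraTneq ekw => ->; rewrite e_irr.
by rewrite !inE wk wC.
Qed.

End ClosedNeighbourhood.

Theorem lemma4 (T : finType) (e : rel T) (C0 : {set T}) (t : T) :
  simple_graph e -> claw_free e -> even_hole e C0 ->
  t \in closed_nbhd e C0 ->
  forall C : {set T}, deform_closure e C0 C -> even_hole e C ->
    t \in closed_nbhd e C.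
Proof.
move=> [e_sym e_irr] e_cf _ tC0 C.
elim=> [//|{}C j k u v _ IH evenC _ kC uv Nk Nj _].
have : k \in nbhd_in e C j by rewrite Nj !inE eqxx orbT.
rewrite inE => /andP[_ ejk].
have [holeC _] := evenC.
exact: (closed_nbhd_deform e_sym e_cf e_irr holeC kC ejk uv Nk (IH evenC)).
Qed.
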